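(* In an efficient enhanced Gelfand--Zetlin pattern, the set of edges is uniquely determined by the underlying Gelfand--Zetlin pattern and the set of encircled entries. That is, two efficient enhanced patterns with the same entries and the same encircled entries have the same edges.
   Context: Let $\lambda=(\lambda_1\ge\dots\ge\lambda_n)$ be a partition. A GZ pattern with top row $\lambda$ is an integer array $a_{ij}$, $0\le i\le n-1$, $1\le j\le n-i$, with $a_{0j}=\lambda_{n+1-j}$ and $a_{i-1,j}\le a_{ij}\le a_{i-1,j+1}$ ($a_{ij}$ sits below $a_{i-1,j}$ and $a_{i-1,j+1}$). An enhanced GZ pattern is such an array with a set of encircled entries and a set of edges, each joining an $a_{ij}$ ($i\ge1$) with $a_{i-1,j}$ or $a_{i-1,j+1}$, such that: (1) row $0$ entries are encircled; (2) entries joined by an edge are equal and the lower one is encircled; (3) for $i\ge1$, $1\le j\le n-i-1$: both $a_{ij},a_{i,j+1}$ are joined to $a_{i-1,j+1}$ iff both are joined to $a_{i+1,j}$; (4) if $a_{0j}=a_{0,j+1}$ then $a_{1j}$ is encircled and joined to both; (5) if $a_{i-1,j}<a_{i-1,j+1}$ and $a_{ij}=a_{i-1,j}$, then $a_{ij}$ is encircled and joined to $a_{i-1,j}$; (6) if $a_{i-1,j}<a_{i-1,j+1}$, $a_{ij}=a_{i-1,j+1}$ and $a_{ij}$ is encircled, then it is joined to $a_{i-1,j+1}$; (7) if $a_{i-1,j}=a_{i-1,j+1}=a_{ij}$ and $a_{i-1,j},a_{i-1,j+1}$ can be connected by a path of edges, then $a_{ij}$ is encircled and joined to both; (8) if $a_{i-1,j}=a_{i-1,j+1}=a_{ij}$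 and $a_{ij}$ is encircled, then it is joined to at least one of them. The pattern is inefficient if it contains $a_{i-1,j}=a_{i-1,j+1}=a_{ij}$ with no edge between $a_{ij}$ and $a_{i-1,j+1}$, and efficient otherwise. *)

From mathcomp Require Import all_boot all_order all_algebra.
From Stdlib Require Import Relations.
Set Implicit Arguments. Unset Strict Implicit. Unset Printing Implicit Defensive.
Import Order.TTheory GRing.Theory Num.Theory.
Local Open Scope ring_scope.

(* A GZ pattern of size n is encoded by a : nat -> nat -> int, where a i j is
   the entry a_{ij} for 0 <= i <= n-1, 1 <= j <= n-i (values elsewhere are
   irrelevant).  Encircled entries: predicate c; edges: eL i j means an edge
   joining a_{ij} with a_{i-1,j}, eR i j an edge joining a_{ij} with a_{i-1,j+1}
   (both only for i >= 1). *)

Definition valid (n i j : nat) : Prop := (i < n)%N /\ (1 <= j)%N /\ (j <= n - i)%N.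

Definition is_partition (n : nat) (lam : seq nat) : Prop :=
  size lam = n /\ sorted geq lam.

Definition GZ_pattern (n : nat) (lam : seq nat) (a : nat -> nat -> int) : Prop :=
  (forall j, (1 <= j <= n)%N -> a 0%N j = (nth 0%N lam (n - j))%:Z) /\
  (forall i j, (1 <= i)%N -> valid n i j ->
     a i.-1 j <= a i j /\ a i j <= a i.-1 j.+1).

Definition edge_adj (eL eR : nat -> nat -> bool) (p q : nat * nat) : Prop :=
  exists i j,
    (eL i j /\ ((p = (i, j) /\ q = (i.-1, j)) \/ (p = (i.-1, j) /\ q = (i, j)))) \/
    (eR i j /\ ((p = (i, j) /\ q = (i.-1, j.+1)) \/ (p = (i.-1, j.+1) /\ q = (i, j)))).

Definition connected_by_edges (eL eR : nat -> nat -> bool) (p q : nat * nat) : Prop :=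
  clos_refl_trans (nat * nat) (edge_adj eL eR) p q.

Definition enhanced_GZ (n : nat) (lam : seq nat) (a : nat -> nat -> int)
    (c eL eR : nat -> nat -> bool) : Prop :=
  GZ_pattern n lam a /\
  (forall i j, c i j -> valid n i j) /\
  (forall i j, eL i j -> (1 <= i)%N /\ valid n i j) /\
  (forall i j, eR i j -> (1 <= i)%N /\ valid n i j) /\
  (* (1) *)
  (forall j, valid n 0 j -> c 0%N j) /\
  (* (2) *)
  (forall i j, eL i j -> a i j = a i.-1 j /\ c i j) /\
  (forall i j, eR i j -> a i j = a i.-1 j.+1 /\ c i j) /\
  (* (3) *)
  (forall i j, (1 <= i)%N -> (1 <= j)%N -> (j <= n - i - 1)%N ->
     (eR i j && eL i j.+1 <-> eL i.+1 j && eR i.+1 j)) /\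
  (* (4) *)
  (forall j, (1 <= j)%N -> (j <= n - 1)%N -> a 0%N j = a 0%N j.+1 ->
     [/\ c 1%N j, eL 1%N j & eR 1%N j]) /\
  (* (5) *)
  (forall i j, (1 <= i)%N -> valid n i j -> a i.-1 j < a i.-1 j.+1 ->
     a i j = a i.-1 j -> c i j /\ eL i j) /\
  (* (6) *)
  (forall i j, (1 <= i)%N -> valid n i j -> a i.-1 j < a i.-1 j.+1 ->
     a i j = a i.-1 j.+1 -> c i j -> eR i j) /\
  (* (7) *)
  (forall i j, (1 <= i)%N -> valid n i j ->
     a i.-1 j = a i.-1 j.+1 -> a i j = a i.-1 j ->
     connected_by_edges eL eR (i.-1, j) (i.-1, j.+1) ->
     [/\ c i j, eL i j & eR i j]) /\
  (* (8) *)
  (forall i j, (1 <= i)%N -> valid n i j ->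
     a i.-1 j = a i.-1 j.+1 -> a i j = a i.-1 j ->
     c i j -> eL i j || eR i j).

Definition efficient (n : nat) (a : nat -> nat -> int) (eR : nat -> nat -> bool) : Prop :=
  ~ (exists i j, [/\ (1 <= i)%N, valid n i j, a i.-1 j = a i.-1 j.+1,
                     a i j = a i.-1 j & ~~ eR i j]).

From mathcomp Require Import all_boot all_order all_algebra zify.
Import Order.TTheory GRing.Theory Num.Theory.
Set Implicit Arguments. Unset Strict Implicit. Unset Printing Implicit Defensive.
Local Open Scope ring_scope.

(* Conditions (2) and (6), together with efficiency, show that a_{ij} is
   joined to a_{i-1,j+1} exactly when the two are equal and a_{ij} is
   encircled, so right edges are determined outright.  For left edges,
   conditions (2) and (5) settle the case a_{i-1,j} < a_{i-1,j+1}; when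
   a_{i-1,j} = a_{i-1,j+1}, condition (4) in row 1 and condition (3) in the
   lower rows (where the right edge is forced by efficiency) express the left
   edge through edges of the row above, and induction on the row concludes. *)

Definition validb (n i j : nat) : bool := [&& (i < n)%N, (0 < j)%N & (j <= n - i)%N].

Lemma validP n i j : reflect (valid n i j) (validb n i j).
Proof. by apply: (iffP and3P) => [[]|[? []]]. Qed.

Section EfficientEdges.

Variables (n : nat) (lam : seq nat) (a : nat -> nat -> int).
Variables (c eL eR : nat -> nat -> bool).
Hypothesis enhanced : enhanced_GZ n lam a c eL eR.
Hypothesis eff : efficient n a eR.

Lemma le_row_above i j : (0 < i)%N -> valid n i j -> a i.-1 j <= a i.-1 j.+1.
Proof.
have [[_ interlace] _] := enhanced.
move=> i_gt0 vij; have [le_left le_right] := interlace i j i_gt0 vij.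
exact: le_trans le_right.
Qed.

Lemma eR_of_eq_above i j : (0 < i)%N -> valid n i j ->
  a i.-1 j = a i.-1 j.+1 -> a i j = a i.-1 j -> eR i j.
Proof.
by move=> i_gt0 vij eq_above eq_left; apply/negPn/negP => not_eR; apply: eff; exists i, j.
Qed.

Lemma eRE i j :
  eR i j = [&& (0 < i)%N, validb n i j, a i j == a i.-1 j.+1 & c i j].
Proof.
have [_ [_ [_ [domR [_ [_ [edgeR [_ [_ [_ [cond6 _]]]]]]]]]]] := enhanced.
apply/idP/and4P => [eRij | [i_gt0 /validP vij /eqP eq_right cij]].
  have [i_gt0 /validP vij] := domR _ _ eRij.
  by have [-> ->] := edgeR _ _ eRij; rewrite i_gt0 vij eqxx.
have := le_row_above i_gt0 vij; rewrite le_eqVlt => /orP[/eqP eq_above | lt_above].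
  by apply: eR_of_eq_above => //; rewrite eq_right eq_above.
exact: cond6.
Qed.

Lemma eL0 j : eL 0 j = false.
Proof.
have [_ [_ [domL _]]] := enhanced.
by apply/negP => /domL [].
Qed.

Lemma eLS i j :
  eL i.+1 j = [&& validb n i.+1 j, a i.+1 j == a i j &
                  (a i j < a i j.+1) || (i == 0)%N || eR i j && eL i j.+1].
Proof.
have [_ [_ [domL [_ [_ [edgeL [_ [cond3 [cond4 [cond5 _]]]]]]]]]] := enhanced.
have cond3_eq k : (0 < k)%N -> valid n k.+1 j ->
    eR k j && eL k j.+1 = eL k.+1 j && eR k.+1 j.
  move=> k_gt0 [_ [j_gt0 j_le]].
  have j_le' : (j <= n - k - 1)%N by lia.
  by apply/idP/idP => /(cond3 k j k_gt0 j_gt0 j_le').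
apply/idP/and3P => [eLij | [/validP vij /eqP eq_left rest]].
  have [_ vij] := domL _ _ eLij; have [/= eq_left _] := edgeL _ _ eLij.
  have /validP -> := vij; rewrite eq_left eqxx; split=> //.
  have := le_row_above (isT : 0 < i.+1)%N vij.
  rewrite le_eqVlt => /orP[/eqP eq_above | ->] //.
  case: i eLij eq_left eq_above vij => [|k] eLij eq_left eq_above vij; first by rewrite orbT.
  by rewrite cond3_eq // eLij (eR_of_eq_above (i := k.+2) isT vij eq_above eq_left) ?orbT.
have := le_row_above (isT : 0 < i.+1)%N vij.
rewrite le_eqVlt => /orP[/eqP eq_above | lt_above].
  rewrite eq_above ltxx /= in rest.
  case: i vij eq_left eq_above rest => [|k] vij eq_left eq_above.
    by case: vij => [? [j_gt0 j_le]] _; case: (cond4 j) => //; lia.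
  by rewrite orFb cond3_eq // => /andP[].
by have [] := cond5 i.+1 j isT vij lt_above eq_left.
Qed.

End EfficientEdges.

Theorem lemma4p2 (n : nat) (lam : seq nat) (a : nat -> nat -> int)
    (c eL eR eL' eR' : nat -> nat -> bool) :
  is_partition n lam ->
  enhanced_GZ n lam a c eL eR -> efficient n a eR ->
  enhanced_GZ n lam a c eL' eR' -> efficient n a eR' ->
  (forall i j, eL i j = eL' i j) /\ (forall i j, eR i j = eR' i j).
Proof.
move=> _ enh eff enh' eff'.
have same_eR i j : eR i j = eR' i j by rewrite (eRE enh eff) (eRE enh' eff').
split=> //; elim=> [|i IH] j; first by rewrite (eL0 enh) (eL0 enh').
by rewrite (eLS enh eff) (eLS enh' eff') same_eR IH.
Qed.
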